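(* Identify $\mathbb{R}^2$ with $\mathbb{C}$. Let $x,y\in\mathbb{B}^2$ and put $\xi=\frac{x+y}{|x+y|}$ if $x+y\ne0$ and $\xi=e_1=1$ if $x+y=0$; put $\zeta=i\xi$. Define $$x'=\tfrac{x+y}{2}-\tfrac{|x-y|}{2}\xi,\quad y'=\tfrac{x+y}{2}+\tfrac{|x-y|}{2}\xi,\quad x''=\tfrac{x+y}{2}-\tfrac{|x-y|}{2}\zeta,\quad y''=\tfrac{x+y}{2}+\tfrac{|x-y|}{2}\zeta,$$ and assume $x',y'\in\mathbb{B}^2$. Then $x'',y''\in\mathbb{B}^2$ and $$\tilde\tau_{\mathbb{B}^2}(x'',y'')\le\tilde\tau_{\mathbb{B}^2}(x,y)\le\tilde\tau_{\mathbb{B}^2}(x',y').$$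
   Context: $\mathbb{B}^2$ is the open unit disk. For a proper subdomain $D\subsetneq\mathbb{R}^n$ and $x,y\in D$, $\tilde\tau_D(x,y)=\log\big(1+\sup_{p\in\partial D}\frac{|x-y|}{\sqrt{|x-p||y-p|}}\big)$ (the scale invariant Cassinian metric). *)

From Stdlib Require Import Reals Lra ClassicalEpsilon.
Open Scope R_scope.

Definition pt := (R * R)%type.

Definition padd (u v : pt) : pt := (fst u + fst v, snd u + snd v).
Definition psub (u v : pt) : pt := (fst u - fst v, snd u - snd v).
Definition pscal (c : R) (u : pt) : pt := (c * fst u, c * snd u).
Definition pnorm (u : pt) : R := sqrt (fst u ^ 2 + snd u ^ 2).
Definition pmul_i (u : pt) : pt := (- snd u, fst u).

Definition unit_disk (z : pt) : Prop := pnorm z < 1.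

Definition boundary (D : pt -> Prop) (p : pt) : Prop :=
  forall eps, 0 < eps ->
    (exists a, D a /\ pnorm (psub a p) < eps) /\
    (exists b, ~ D b /\ pnorm (psub b p) < eps).

Definition Rsup (E : R -> Prop) : R :=
  epsilon (inhabits 0) (fun s => is_lub E s).

Definition tau_tilde (D : pt -> Prop) (x y : pt) : R :=
  ln (1 + Rsup (fun t => exists p, boundary D p /\
        t = pnorm (psub x y) / sqrt (pnorm (psub x p) * pnorm (psub y p)))).

Definition xi_of (x y : pt) : pt :=
  if Req_EM_T (pnorm (padd x y)) 0 then (1, 0)
  else pscal (/ pnorm (padd x y)) (padd x y).

From Stdlib Require Import Reals Lra ClassicalEpsilon.
Open Scope R_scope.

(* Put m = s * xi with s >= 0 and |xi| = 1, and rotate the plane by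
   the conjugate of xi: the three pairs (x,y), (x',y'), (x'',y'') become (s,0) +- c with
   |c| = r, where c = (-r,0) for the radial pair (x',y') and c = (0,-r) for the
   perpendicular pair (x'',y'').  All three pairs have |X - Y| = 2r, so by the
   definition of the Cassinian metric, tau(X,Y) <= tau(X',Y') as soon as every
   value of |X-p||Y-p| (p on the unit circle) is at least some value of
   |X'-p'||Y'-p'|.  Writing Q(c,p) (dist_prod_sq) for the square of that
   product for the pair (s,0) +- c, the
   argument reduces to two real inequalities on the unit circle:
   (1) Q(c,p) >= ((1-s)^2 - r^2)^2, attained by c = (-r,0) at p = (1,0);
   (2) some p satisfies Q(c,p) <= Q((0,-r),q) for every q.
   Inequality (2) is the heart of the proof: we compute the minimum of the
   quadratic q1 |-> Q((0,-r),q) and hit it by shooting a ray from (s,0) in a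
   suitably tilted direction. *)

Definition dist_prod_sq (s c1 c2 p1 p2 : R) : R :=
  ((s + c1 - p1)^2 + (c2 - p2)^2) * ((s - c1 - p1)^2 + (- c2 - p2)^2).

Lemma dist_prod_sq_polar s c1 c2 p1 p2 r : c1^2 + c2^2 = r^2 ->
  dist_prod_sq s c1 c2 p1 p2
  = (((p1 - s)^2 + p2^2) + r^2)^2 - 4 * ((p1 - s) * c1 + p2 * c2)^2.
Proof. intros Hc. unfold dist_prod_sq. rewrite <- Hc. ring. Qed.

(* Inequality (1): on the unit circle Q is at least ((1-s)^2 - r^2)^2, by
   Cauchy-Schwarz and |p - (s,0)| >= 1 - s. *)
Lemma dist_prod_sq_lower s r c1 c2 p1 p2 :
  0 <= s -> 0 <= r -> s + r < 1 -> c1^2 + c2^2 = r^2 -> p1^2 + p2^2 = 1 ->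
  ((1 - s)^2 - r^2)^2 <= dist_prod_sq s c1 c2 p1 p2.
Proof.
  intros Hs Hr Hsr Hc Hp.
  rewrite (dist_prod_sq_polar _ _ _ _ _ r Hc).
  set (N := (p1 - s)^2 + p2^2).
  assert (Hcs : ((p1 - s) * c1 + p2 * c2)^2 <= N * r^2).
  { unfold N; rewrite <- Hc. pose proof (pow2_ge_0 ((p1 - s) * c2 - p2 * c1)). nra. }
  assert (HN : (1 - s)^2 <= N) by (unfold N; nra).
  assert (HB : 0 <= (1 - s)^2 - r^2) by nra.
  assert ((N - r^2)^2 <= (N + r^2)^2 - 4 * ((p1 - s) * c1 + p2 * c2)^2) by nra.
  assert (((1 - s)^2 - r^2)^2 <= (N - r^2)^2) by nra.
  lra.
Qed.

Lemma dist_prod_sq_perp s r q1 q2 : q1^2 + q2^2 = 1 ->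
  dist_prod_sq s 0 (-r) q1 q2 = (1 + s^2 + r^2 - 2 * s * q1)^2 - 4 * r^2 * (1 - q1^2).
Proof.
  intros Hq. replace (1 - q1^2) with (q2^2) by lra.
  transitivity (((s - q1)^2 + r^2 + q2^2)^2 - 4 * r^2 * q2^2);
    [unfold dist_prod_sq; ring | rewrite <- Hq; ring].
Qed.

(* If the vertex of that quadratic lies beyond q1 = 1, its minimum on the
   circle is the value at q = (1,0). *)
Lemma perp_lower_endpoint s r q1 q2 :
  0 <= s -> 2 * (s^2 + r^2) <= s * (1 + s^2 + r^2) -> q1^2 + q2^2 = 1 ->
  ((1 - s)^2 + r^2)^2 <= dist_prod_sq s 0 (-r) q1 q2.
Proof.
  intros Hs Hend Hq. rewrite (dist_prod_sq_perp _ _ _ _ Hq).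
  assert (Hq1 : q1 <= 1) by nra.
  assert (0 <= (1 - q1) * (s * (1 + s^2 + r^2) - (s^2 + r^2) * (q1 + 1))).
  { apply Rmult_le_pos; nra. }
  nra.
Qed.

(* Otherwise the vertex u lies in the arc, and with v0 = sqrt(1 - u^2) the
   minimum is the value at (u, v0). *)
Lemma perp_lower_interior s r u v0 q1 q2 :
  0 <= s^2 + r^2 -> 2 * (s^2 + r^2) * u = s * (1 + s^2 + r^2) -> v0^2 = 1 - u^2 ->
  q1^2 + q2^2 = 1 ->
  ((1 - 2 * s * u + s^2) + r^2)^2 - 4 * r^2 * v0^2 <= dist_prod_sq s 0 (-r) q1 q2.
Proof.
  intros HP Hu Hv Hq. rewrite (dist_prod_sq_perp _ _ _ _ Hq), Hv.
  assert (E : (1 + s^2 + r^2 - 2 * s * q1)^2 - 4 * r^2 * (1 - q1^2)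
              - (((1 - 2 * s * u + s^2) + r^2)^2 - 4 * r^2 * (1 - u^2))
            = 4 * (s^2 + r^2) * (q1 - u)^2 + 4 * (q1 - u) * (2 * (s^2 + r^2) * u - s * (1 + s^2 + r^2))) by ring.
  rewrite Hu in E.
  assert (0 <= 4 * (s^2 + r^2) * (q1 - u)^2) by (apply Rmult_le_pos; [lra | apply pow2_ge_0]).
  lra.
Qed.

(* The ray from (s,0) with direction cosine e1 meets the unit circle at
   distance l >= 0. *)
Lemma ray_hits_circle s e1 : 0 <= s <= 1 -> e1^2 <= 1 ->
  exists l, 0 <= l /\ l^2 + 2 * s * e1 * l = 1 - s^2.
Proof.
  intros Hs He. set (S := sqrt (s^2 * e1^2 + 1 - s^2)).
  assert (HS : S * S = s^2 * e1^2 + 1 - s^2) by (apply sqrt_sqrt; nra).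
  assert (0 <= S) by apply sqrt_pos.
  exists (- s * e1 + S). split; nra.
Qed.

(* The polar form of Q at distance sqrt T from the centre, with projection
   term D, is monotone in T on [r^2, N0] under the stated projection bound. *)
Lemma quartic_bound N0 r v0 T D : 0 < N0 -> r^2 <= T -> T <= N0 -> v0^2 <= N0 ->
  r^2 * v0^2 <= D * N0 ->
  (T + r^2)^2 - 4 * T * D <= (N0 + r^2)^2 - 4 * r^2 * v0^2.
Proof.
  intros HN HT1 HT2 Hv HD.
  assert (E : N0 * ((N0 + r^2)^2 - 4 * r^2 * v0^2) - (N0 * (T + r^2)^2 - 4 * T * r^2 * v0^2)
     = (N0 - T) * (N0 * (N0 + T + 2 * r^2) - 4 * r^2 * v0^2)) by ring.
  assert (0 <= N0 * (N0 + T + 2 * r^2) - 4 * r^2 * v0^2) by nra.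
  assert (0 <= (N0 - T) * (N0 * (N0 + T + 2 * r^2) - 4 * r^2 * v0^2)) by nra.
  assert (N0 * ((T + r^2)^2 - 4 * T * D) <= N0 * (T + r^2)^2 - 4 * T * r^2 * v0^2) by nra.
  apply (Rmult_le_reg_l N0); lra.
Qed.

(* A direction e that is steep enough (first condition) and whose projection
   on c is large enough (second condition) produces a circle point where Q is
   below the perpendicular minimum (N0 + r^2)^2 - 4 r^2 v0^2. *)
Lemma ray_witness s r c1 c2 e1 e2 u v0 :
  0 <= s -> 0 <= r -> s + r < 1 -> c1^2 + c2^2 = r^2 -> e1^2 + e2^2 = 1 ->
  s <= u -> u <= 1 -> v0^2 = 1 - u^2 ->
  u - s <= e1 * sqrt (1 - 2 * s * u + s^2) ->
  r^2 * v0^2 <= (e1 * c1 + e2 * c2)^2 * (1 - 2 * s * u + s^2) ->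
  exists p1 p2, p1^2 + p2^2 = 1 /\
    dist_prod_sq s c1 c2 p1 p2 <= ((1 - 2 * s * u + s^2) + r^2)^2 - 4 * r^2 * v0^2.
Proof.
  intros Hs Hr Hsr Hc He Hsu Hu1 Hv Hdir Hproj.
  set (N0 := 1 - 2 * s * u + s^2) in *.
  assert (HN0v : N0 = 1 - 2 * s * u + s^2) by reflexivity.
  assert (HN0 : (1 - s)^2 <= N0) by (unfold N0; nra).
  set (L0 := sqrt N0) in *.
  assert (HL0 : L0 * L0 = N0) by (apply sqrt_sqrt; nra).
  assert (HL0p : 0 < L0) by (apply sqrt_lt_R0; nra).
  assert (He1 : 0 <= e1).
  { destruct (Rle_or_lt 0 e1) as [h | h]; [exact h |].
    assert (e1 * L0 < 0) by (apply Rmult_neg_pos; lra). lra. }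
  destruct (ray_hits_circle s e1) as [l [Hl0 Hl]]; [lra | nra |].
  assert (He1' : e1 <= 1) by nra.
  assert (Hl1 : 1 - s <= l).
  { assert (s * e1 * l <= s * l) by (apply Rmult_le_compat_r; nra).
    assert (1 <= (l + s)^2) by nra. nra. }
  assert (HlL : l <= L0).
  { destruct (Rle_or_lt l L0) as [h | h]; [exact h | exfalso].
    assert (e1 * L0 <= e1 * l) by (apply Rmult_le_compat_l; lra).
    assert (s * (u - s) <= s * (e1 * l)) by (apply Rmult_le_compat_l; lra).
    assert (L0 * L0 < l * l) by (apply Rmult_le_0_lt_compat; lra). nra. }
  exists (s + l * e1), (l * e2). split; [nra |].
  rewrite (dist_prod_sq_polar _ _ _ _ _ r Hc).
  replace ((s + l * e1 - s)^2 + (l * e2)^2) with (l^2) by nra.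
  replace (4 * ((s + l * e1 - s) * c1 + l * e2 * c2)^2)
    with (4 * l^2 * (e1 * c1 + e2 * c2)^2) by ring.
  apply quartic_bound; nra.
Qed.

Lemma rotated_first_coord k g A B : 0 <= k -> 0 <= g -> k^2 + g^2 = 1 -> 0 <= A -> 0 <= B ->
  A^2 + B^2 = 1 -> A <= g -> k <= k * B + g * A.
Proof.
  intros Hk Hg Hkg HA HB HAB HAg.
  assert (E : (k * B + g * A - k) * (1 + B) = A * (g * (1 + B) - k * A)) by nra.
  assert (0 <= A * (g * (1 + B) - k * A)).
  { apply Rmult_le_pos; [lra |]. assert (k * A <= A) by nra. nra. }
  destruct (Rle_or_lt k (k * B + g * A)) as [h | h]; [exact h | exfalso].
  assert ((k * B + g * A - k) * (1 + B) < 0) by (apply Rmult_neg_pos; lra). lra.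
Qed.

Lemma tilted_direction_nonneg k g A B : 0 <= k -> 0 <= g -> k^2 + g^2 = 1 ->
  0 <= A -> 0 <= B -> A^2 + B^2 = 1 -> A^2 <= g^2 ->
  exists e1 e2, e1^2 + e2^2 = 1 /\ k <= e1 /\ (e1 * A + e2 * B)^2 = g^2.
Proof.
  intros Hk Hg Hkg HA HB HAB HAg.
  exists (k * B + g * A), (g * B - k * A). repeat split.
  - transitivity ((k^2 + g^2) * (A^2 + B^2)); [ring | rewrite Hkg, HAB; ring].
  - apply rotated_first_coord; nra.
  - transitivity ((g * (A^2 + B^2))^2); [ring | rewrite HAB; ring].
Qed.

Lemma tilted_direction k g a b : 0 <= k -> 0 <= g -> k^2 + g^2 = 1 ->
  a^2 + b^2 = 1 -> a^2 <= g^2 ->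
  exists e1 e2, e1^2 + e2^2 = 1 /\ k <= e1 /\ (e1 * a + e2 * b)^2 = g^2.
Proof.
  intros Hk Hg Hkg Hab Hag.
  destruct (tilted_direction_nonneg k g (Rabs a) (Rabs b)) as [e1 [e2 [He [Hke Hproj]]]];
    try apply Rabs_pos; rewrite ?pow2_abs; try assumption.
  destruct (Rle_or_lt 0 a), (Rle_or_lt 0 b);
    rewrite ?(Rabs_pos_eq a), ?(Rabs_pos_eq b), ?(Rabs_left a), ?(Rabs_left b) in Hproj by lra;
    [exists e1, e2 | exists e1, (- e2) | exists e1, (- e2) | exists e1, e2];
    repeat split; try lra; rewrite <- Hproj; ring.
Qed.

(* A direction steep enough for the ray argument whose projection on c is
   large enough: the radial one if it works, otherwise a tilted one. *)
Lemma good_direction s r c1 c2 u v0 N0 :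
  0 <= r -> c1^2 + c2^2 = r^2 -> s <= u -> 0 <= v0 -> 0 < N0 -> (u - s)^2 + v0^2 = N0 ->
  exists e1 e2, e1^2 + e2^2 = 1 /\ u - s <= e1 * sqrt N0 /\
    r^2 * v0^2 <= (e1 * c1 + e2 * c2)^2 * N0.
Proof.
  intros Hr Hc Hsu Hv0 HN0p HN0.
  set (L0 := sqrt N0).
  assert (HL0 : L0 * L0 = N0) by (apply sqrt_sqrt; lra).
  assert (HL0p : 0 < L0) by (apply sqrt_lt_R0; lra).
  destruct (Rle_or_lt (r^2 * v0^2) (c1^2 * N0)) as [Hc1 | Hc1].
  { exists 1, 0. repeat split; nra. }
  assert (Hrp : 0 < r).
  { destruct (Rle_or_lt r 0) as [h | h]; [| exact h].
    replace r with 0 in Hc1 by lra. nra. }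
  set (k := (u - s) / L0). set (g := v0 / L0).
  set (a := c1 / r). set (b := c2 / r).
  assert (HkL : k * L0 = u - s) by (unfold k; field; lra).
  assert (HgL : g * L0 = v0) by (unfold g; field; lra).
  assert (Ha : c1 = r * a) by (unfold a; field; lra).
  assert (Hb : c2 = r * b) by (unfold b; field; lra).
  assert (Hkg : k^2 + g^2 = 1).
  { apply (Rmult_eq_reg_r N0); [| lra].
    replace ((k^2 + g^2) * N0) with ((k * L0)^2 + (g * L0)^2) by (rewrite <- HL0; ring).
    rewrite HkL, HgL, HN0. ring. }
  assert (Hab : a^2 + b^2 = 1).
  { apply (Rmult_eq_reg_r (r^2)); [| nra].
    replace ((a^2 + b^2) * r^2) with ((r * a)^2 + (r * b)^2) by ring.
    rewrite <- Ha, <- Hb. lra. }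
  assert (Hag : a^2 <= g^2).
  { apply (Rmult_le_reg_r (r^2 * N0)); [nra |].
    replace (a^2 * (r^2 * N0)) with (c1^2 * N0) by (rewrite Ha; ring).
    replace (g^2 * (r^2 * N0)) with (r^2 * v0^2) by (rewrite <- HL0, <- HgL; ring).
    lra. }
  destruct (tilted_direction k g a b) as [e1 [e2 [He [Hke Hproj]]]]; try nra; try assumption.
  exists e1, e2. repeat split; [exact He | |].
  - fold L0. rewrite <- HkL. apply Rmult_le_compat_r; lra.
  - replace ((e1 * c1 + e2 * c2)^2 * N0) with (r^2 * (e1 * a + e2 * b)^2 * (L0 * L0))
      by (rewrite Ha, Hb, HL0; ring).
    rewrite Hproj, <- HgL. right; ring.
Qed.

Lemma interior_witness s r c1 c2 u v0 :
  0 <= s -> 0 <= r -> s + r < 1 -> c1^2 + c2^2 = r^2 ->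
  s <= u -> u < 1 -> 0 <= v0 -> v0^2 = 1 - u^2 ->
  exists p1 p2, p1^2 + p2^2 = 1 /\
    dist_prod_sq s c1 c2 p1 p2 <= ((1 - 2 * s * u + s^2) + r^2)^2 - 4 * r^2 * v0^2.
Proof.
  intros Hs Hr Hsr Hc Hsu Hu1 Hv0 Hv.
  destruct (good_direction s r c1 c2 u v0 (1 - 2 * s * u + s^2)) as [e1 [e2 [He [Hsteep Hproj]]]];
    try nra; try assumption.
  apply (ray_witness s r c1 c2 e1 e2 u v0); auto; lra.
Qed.

Lemma perp_dominates s r c1 c2 : 0 <= s -> 0 <= r -> s + r < 1 -> c1^2 + c2^2 = r^2 ->
  exists p1 p2, p1^2 + p2^2 = 1 /\
    forall q1 q2, q1^2 + q2^2 = 1 -> dist_prod_sq s c1 c2 p1 p2 <= dist_prod_sq s 0 (-r) q1 q2.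
Proof.
  intros Hs Hr Hsr Hc.
  destruct (Rle_or_lt (2 * (s^2 + r^2)) (s * (1 + s^2 + r^2))) as [Hend | Hint].
  - (* the perpendicular minimum sits at q = (1,0), where p = (1,0) is at least as close *)
    exists 1, 0. split; [lra |]. intros q1 q2 Hq.
    apply (Rle_trans _ (((1 - s)^2 + r^2)^2)); [| apply perp_lower_endpoint; lra].
    rewrite (dist_prod_sq_polar _ _ _ _ _ r Hc).
    pose proof (pow2_ge_0 ((1 - s) * c1 + 0 * c2)). nra.
  - (* the perpendicular minimum sits at q1 = u in the interior of the arc *)
    assert (HP : 0 < s^2 + r^2) by nra.
    set (u := s * (1 + s^2 + r^2) / (2 * (s^2 + r^2))).
    assert (Hu : 2 * (s^2 + r^2) * u = s * (1 + s^2 + r^2)) by (unfold u; field; lra).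
    assert (HP1 : s^2 + r^2 < 1) by nra.
    assert (Hsu : s <= u).
    { assert (2 * (s^2 + r^2) * (u - s) = s * (1 - (s^2 + r^2))) by nra. nra. }
    assert (Hu1 : u < 1) by nra.
    set (v0 := sqrt (1 - u^2)).
    assert (Hv : v0^2 = 1 - u^2) by (apply pow2_sqrt; nra).
    destruct (interior_witness s r c1 c2 u v0) as [p1 [p2 [Hp Hle]]];
      try apply sqrt_pos; try assumption.
    exists p1, p2. split; [exact Hp |]. intros q1 q2 Hq.
    apply (Rle_trans _ _ _ Hle). apply perp_lower_interior; lra.
Qed.

Definition sqnorm (u : pt) : R := fst u ^ 2 + snd u ^ 2.

Lemma pt_eq (u v : pt) : fst u = fst v -> snd u = snd v -> u = v.
Proof. destruct u, v; cbn [fst snd]; intros -> ->; reflexivity. Qed.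

Lemma sqnorm_nonneg u : 0 <= sqnorm u.
Proof. unfold sqnorm. nra. Qed.

Lemma pnorm_sq u : pnorm u ^ 2 = sqnorm u.
Proof. apply pow2_sqrt, sqnorm_nonneg. Qed.

Lemma unit_disk_iff z : unit_disk z <-> sqnorm z < 1.
Proof.
  unfold unit_disk, pnorm. fold (sqnorm z). split; intros H.
  - rewrite <- sqrt_1 in H. exact (sqrt_lt_0_alt _ _ H).
  - rewrite <- sqrt_1. apply sqrt_lt_1_alt. split; [apply sqnorm_nonneg | exact H].
Qed.

Lemma pnorm_triangle u v : pnorm (padd u v) <= pnorm u + pnorm v.
Proof.
  pose proof (pnorm_sq u) as Hu. pose proof (pnorm_sq v) as Hv.
  pose proof (pnorm_sq (padd u v)) as Huv.
  assert (0 <= pnorm u) by apply sqrt_pos. assert (0 <= pnorm v) by apply sqrt_pos.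
  assert (0 <= pnorm (padd u v)) by apply sqrt_pos.
  unfold sqnorm, padd in *; cbn [fst snd] in *.
  assert (Hcs : fst u * fst v + snd u * snd v <= pnorm u * pnorm v).
  { assert ((fst u * fst v + snd u * snd v)^2 <= (pnorm u * pnorm v)^2).
    { rewrite Rpow_mult_distr, Hu, Hv.
      pose proof (pow2_ge_0 (fst u * snd v - snd u * fst v)). nra. }
    assert (0 <= pnorm u * pnorm v) by nra. nra. }
  nra.
Qed.

Lemma pnorm_sub_triangle u v : pnorm u <= pnorm (psub u v) + pnorm v.
Proof.
  replace u with (padd (psub u v) v) at 1 by (apply pt_eq; unfold padd, psub; cbn [fst snd]; ring).
  apply pnorm_triangle.
Qed.

Lemma pnorm_psub_sym u v : pnorm (psub u v) = pnorm (psub v u).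
Proof. unfold pnorm, psub; cbn [fst snd]. f_equal. ring. Qed.

Lemma boundary_on_circle p : boundary unit_disk p -> sqnorm p = 1.
Proof.
  intros Hp. rewrite <- pnorm_sq.
  assert (0 <= pnorm p) by apply sqrt_pos.
  destruct (Rtotal_order (pnorm p) 1) as [h | [h | h]]; [exfalso | rewrite h; ring | exfalso].
  - (* an interior point has a whole ball inside the disk *)
    destruct (Hp (1 - pnorm p)) as [_ [b [Hb Hbp]]]; [lra |].
    apply Hb. pose proof (pnorm_sub_triangle b p). unfold unit_disk. lra.
  - (* an exterior point has a whole ball outside the disk *)
    destruct (Hp (pnorm p - 1)) as [[a [Ha Hap]] _]; [lra |].
    pose proof (pnorm_sub_triangle p a). rewrite pnorm_psub_sym in Hap.
    unfold unit_disk in Ha. lra.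
Qed.

Lemma circle_in_boundary p : sqnorm p = 1 -> boundary unit_disk p.
Proof.
  intros Hp eps Heps. split.
  - (* the point (1 - t) p lies in the disk at distance t from p *)
    pose proof (Rmin_l (eps / 2) (1 / 2)). pose proof (Rmin_r (eps / 2) (1 / 2)).
    pose proof (Rmin_pos (eps / 2) (1 / 2)).
    set (t := Rmin (eps / 2) (1 / 2)) in *.
    assert (Ht : 0 < t /\ t < eps /\ t <= 1 / 2) by (repeat split; lra).
    exists (pscal (1 - t) p). split.
    + apply unit_disk_iff. unfold sqnorm, pscal in *; cbn [fst snd]. nra.
    + unfold pnorm, psub, pscal; cbn [fst snd].
      replace (((1 - t) * fst p - fst p) ^ 2 + ((1 - t) * snd p - snd p) ^ 2)
        with (t ^ 2 * sqnorm p) by (unfold sqnorm; ring).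
      rewrite Hp, Rmult_1_r, sqrt_pow2; lra.
  - exists p. split.
    + intros Hd. apply unit_disk_iff in Hd. lra.
    + unfold pnorm, psub; cbn [fst snd].
      replace ((fst p - fst p) ^ 2 + (snd p - snd p) ^ 2) with 0 by ring.
      rewrite sqrt_0. lra.
Qed.

Lemma Rsup_is_lub (E : R -> Prop) :
  (exists t, E t) -> (exists M, forall t, E t -> t <= M) -> is_lub E (Rsup E).
Proof.
  intros Hne Hbd. unfold Rsup. apply epsilon_spec.
  destruct (completeness E Hbd Hne) as [m Hm]. exists m; exact Hm.
Qed.

Lemma Rsup_le_dominated (E E' : R -> Prop) :
  (exists t, E t) -> (exists M, forall t, E' t -> t <= M) ->
  (forall t, E t -> exists t', E' t' /\ t <= t') ->
  Rsup E <= Rsup E'.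
Proof.
  intros [t0 Ht0] [M HM] Hdom.
  assert (HE' : is_lub E' (Rsup E')).
  { apply Rsup_is_lub; [| exists M; exact HM].
    destruct (Hdom t0 Ht0) as [t' [Ht' _]]. exists t'; exact Ht'. }
  assert (HE : is_lub E (Rsup E)).
  { apply Rsup_is_lub; [exists t0; exact Ht0 |]. exists M. intros t Ht.
    destruct (Hdom t Ht) as [t' [Ht' Hle]]. specialize (HM t' Ht'). lra. }
  apply (proj2 HE). intros t Ht. destruct (Hdom t Ht) as [t' [Ht' Hle]].
  pose proof (proj1 HE' t' Ht'). lra.
Qed.

Lemma ln_le_mono a b : 0 < a -> a <= b -> ln a <= ln b.
Proof.
  intros Ha Hab. destruct (Rle_lt_or_eq_dec a b Hab) as [h | ->]; [| lra].
  left. apply ln_increasing; lra.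
Qed.

Definition dist_prod (X Y p : pt) : R := pnorm (psub X p) * pnorm (psub Y p).

Lemma div_sqrt_antimono d a b : 0 <= d -> 0 < a -> a <= b -> d / sqrt b <= d / sqrt a.
Proof.
  intros Hd Ha Hab. unfold Rdiv. apply Rmult_le_compat_l; [lra |].
  apply Rinv_le_contravar; [apply sqrt_lt_R0; lra | apply sqrt_le_1_alt; lra].
Qed.

Lemma tau_le_of_dist_prod (D : pt -> Prop) (p0 X Y X' Y' : pt) (lb : R) :
  boundary D p0 -> 0 < lb ->
  pnorm (psub X Y) = pnorm (psub X' Y') ->
  (forall p, boundary D p -> lb <= dist_prod X' Y' p) ->
  (forall p, boundary D p -> exists p', boundary D p' /\ dist_prod X' Y' p' <= dist_prod X Y p) ->
  tau_tilde D X Y <= tau_tilde D X' Y'.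
Proof.
  intros Hp0 Hlb Hd Hlow' Hdom. unfold tau_tilde. rewrite <- Hd.
  assert (Hlow : forall p, boundary D p -> lb <= dist_prod X Y p).
  { intros p Hp. destruct (Hdom p Hp) as [p' [Hp' Hle]]. specialize (Hlow' p' Hp'). lra. }
  set (d := pnorm (psub X Y)).
  assert (Hd0 : 0 <= d) by apply sqrt_pos.
  set (E := fun t => exists p, boundary D p /\ t = d / sqrt (dist_prod X Y p)).
  set (E' := fun t => exists p, boundary D p /\ t = d / sqrt (dist_prod X' Y' p)).
  set (t0 := d / sqrt (dist_prod X Y p0)).
  assert (Ht0 : E t0) by (exists p0; split; [exact Hp0 | reflexivity]).
  assert (Hbd : forall t, E t -> t <= d / sqrt lb).
  { intros t [p [Hp ->]]. apply div_sqrt_antimono; auto. }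
  assert (Hsup : Rsup E <= Rsup E').
  { apply Rsup_le_dominated; [exists t0; exact Ht0 | |].
    - exists (d / sqrt lb). intros t [p [Hp ->]]. apply div_sqrt_antimono; auto.
    - intros t [p [Hp ->]]. destruct (Hdom p Hp) as [p' [Hp' Hle]].
      exists (d / sqrt (dist_prod X' Y' p')). split; [exists p'; split; auto |].
      apply div_sqrt_antimono; [lra | specialize (Hlow' p' Hp'); lra | exact Hle]. }
  assert (Hnonneg : 0 <= t0).
  { unfold t0, Rdiv. apply Rmult_le_pos; [lra |].
    left. apply Rinv_0_lt_compat, sqrt_lt_R0. specialize (Hlow p0 Hp0). lra. }
  assert (Ht0sup : t0 <= Rsup E).
  { apply Rsup_is_lub; [exists t0; exact Ht0 | exists (d / sqrt lb); exact Hbd | exact Ht0]. }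
  change (ln (1 + Rsup E) <= ln (1 + Rsup E')). apply ln_le_mono; lra.
Qed.

(* Multiplication by e under the identification R^2 = C; a rotation when
   |e| = 1, with inverse multiplication by the conjugate. *)
Definition rot (e u : pt) : pt :=
  (fst e * fst u - snd e * snd u, snd e * fst u + fst e * snd u).

Definition pconj (e : pt) : pt := (fst e, - snd e).

Lemma sqnorm_rot e u : sqnorm (rot e u) = sqnorm e * sqnorm u.
Proof. unfold sqnorm, rot; cbn [fst snd]. ring. Qed.

Lemma sqnorm_conj e : sqnorm (pconj e) = sqnorm e.
Proof. unfold sqnorm, pconj; cbn [fst snd]. ring. Qed.

Lemma pnorm_rot e u : sqnorm e = 1 -> pnorm (rot e u) = pnorm u.
Proof.
  intros He. change (sqrt (sqnorm (rot e u)) = sqrt (sqnorm u)).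
  rewrite sqnorm_rot, He, Rmult_1_l. reflexivity.
Qed.

Lemma rot_conj e u : sqnorm e = 1 -> rot e (rot (pconj e) u) = u.
Proof.
  intros He. unfold sqnorm in He.
  apply pt_eq; unfold rot, pconj; cbn [fst snd];
    [transitivity ((fst e ^ 2 + snd e ^ 2) * fst u) | transitivity ((fst e ^ 2 + snd e ^ 2) * snd u)];
    solve [ring | rewrite He; ring].
Qed.

Lemma rot_psub e u v : psub (rot e u) (rot e v) = rot e (psub u v).
Proof. apply pt_eq; unfold psub, rot; cbn [fst snd]; ring. Qed.

Lemma boundary_rot e q : sqnorm e = 1 -> boundary unit_disk (rot e q) <-> sqnorm q = 1.
Proof.
  intros He. split; intros Hq.
  - apply boundary_on_circle in Hq. rewrite sqnorm_rot, He in Hq. lra.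
  - apply circle_in_boundary. rewrite sqnorm_rot, He, Hq. ring.
Qed.

(* The symmetric pair s e +- e c: the rotation by e of (s,0) +- c. *)
Definition cfg_left (e : pt) (s : R) (c : pt) : pt := padd (pscal s e) (rot e c).
Definition cfg_right (e : pt) (s : R) (c : pt) : pt := psub (pscal s e) (rot e c).

Lemma cfg_left_rot e s c : cfg_left e s c = rot e (s + fst c, snd c).
Proof. apply pt_eq; unfold cfg_left, padd, pscal, rot; cbn [fst snd]; ring. Qed.

Lemma cfg_right_rot e s c : cfg_right e s c = rot e (s - fst c, - snd c).
Proof. apply pt_eq; unfold cfg_right, psub, pscal, rot; cbn [fst snd]; ring. Qed.

Lemma sqnorm_cfg e s c : sqnorm e = 1 ->
  sqnorm (cfg_left e s c) = (s + fst c) ^ 2 + snd c ^ 2 /\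
  sqnorm (cfg_right e s c) = (s - fst c) ^ 2 + snd c ^ 2.
Proof.
  intros He. rewrite cfg_left_rot, cfg_right_rot, !sqnorm_rot, He.
  unfold sqnorm; cbn [fst snd]. split; ring.
Qed.

Lemma pnorm_cfg_diff e s c : sqnorm e = 1 ->
  pnorm (psub (cfg_left e s c) (cfg_right e s c)) = sqrt (4 * sqnorm c).
Proof.
  intros He. rewrite cfg_left_rot, cfg_right_rot, rot_psub, pnorm_rot by exact He.
  unfold pnorm, psub, sqnorm; cbn [fst snd]. f_equal. ring.
Qed.

Lemma dist_prod_cfg e s c q : sqnorm e = 1 ->
  dist_prod (cfg_left e s c) (cfg_right e s c) (rot e q)
  = sqrt (dist_prod_sq s (fst c) (snd c) (fst q) (snd q)).
Proof.
  intros He. unfold dist_prod.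
  rewrite cfg_left_rot, cfg_right_rot, !rot_psub, !pnorm_rot by exact He.
  unfold pnorm, psub, dist_prod_sq; cbn [fst snd].
  symmetry. apply sqrt_mult; apply Rplus_le_le_0_compat; apply pow2_ge_0.
Qed.

Lemma dist_prod_cfg_lower e s r c p : sqnorm e = 1 -> 0 <= s -> 0 <= r -> s + r < 1 ->
  sqnorm c = r ^ 2 -> boundary unit_disk p ->
  (1 - s) ^ 2 - r ^ 2 <= dist_prod (cfg_left e s c) (cfg_right e s c) p.
Proof.
  intros He Hs Hr Hsr Hc Hp.
  rewrite <- (rot_conj e p He) in Hp |- *. apply (boundary_rot e _ He) in Hp.
  rewrite dist_prod_cfg by exact He.
  rewrite <- (sqrt_pow2 ((1 - s) ^ 2 - r ^ 2)) by nra.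
  apply sqrt_le_1_alt, dist_prod_sq_lower; auto.
Qed.

Lemma tau_cfg_le e s r c c' : sqnorm e = 1 -> 0 <= s -> 0 <= r -> s + r < 1 ->
  sqnorm c = r ^ 2 -> sqnorm c' = r ^ 2 ->
  (forall q, sqnorm q = 1 -> exists q', sqnorm q' = 1 /\
     dist_prod_sq s (fst c') (snd c') (fst q') (snd q')
       <= dist_prod_sq s (fst c) (snd c) (fst q) (snd q)) ->
  tau_tilde unit_disk (cfg_left e s c) (cfg_right e s c)
    <= tau_tilde unit_disk (cfg_left e s c') (cfg_right e s c').
Proof.
  intros He Hs Hr Hsr Hc Hc' Hdom.
  apply (tau_le_of_dist_prod _ (1, 0) _ _ _ _ ((1 - s) ^ 2 - r ^ 2)).
  - apply circle_in_boundary. unfold sqnorm; cbn [fst snd]. ring.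
  - nra.
  - rewrite !pnorm_cfg_diff, Hc, Hc' by exact He. reflexivity.
  - intros p Hp. apply (dist_prod_cfg_lower e s r); auto.
  - intros p Hp. rewrite <- (rot_conj e p He) in Hp |- *.
    apply (boundary_rot e _ He) in Hp.
    destruct (Hdom _ Hp) as [q' [Hq' Hle]].
    exists (rot e q'). split; [apply boundary_rot; auto |].
    rewrite !dist_prod_cfg by exact He. apply sqrt_le_1_alt, Hle.
Qed.

(* The radial pair is the farthest: its Q attains the bound (1) at (1,0). *)
Lemma tau_cfg_le_radial e s r c : sqnorm e = 1 -> 0 <= s -> 0 <= r -> s + r < 1 ->
  sqnorm c = r ^ 2 ->
  tau_tilde unit_disk (cfg_left e s c) (cfg_right e s c)
    <= tau_tilde unit_disk (cfg_left e s (- r, 0)) (cfg_right e s (- r, 0)).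
Proof.
  intros He Hs Hr Hsr Hc. apply (tau_cfg_le e s r); auto.
  - unfold sqnorm; cbn [fst snd]. ring.
  - intros q Hq. exists (1, 0). split; [unfold sqnorm; cbn [fst snd]; ring |].
    cbn [fst snd]. replace (dist_prod_sq s (- r) 0 1 0) with (((1 - s) ^ 2 - r ^ 2) ^ 2)
      by (unfold dist_prod_sq; ring).
    apply dist_prod_sq_lower; auto.
Qed.

Lemma tau_cfg_perp_le e s r c : sqnorm e = 1 -> 0 <= s -> 0 <= r -> s + r < 1 ->
  sqnorm c = r ^ 2 ->
  tau_tilde unit_disk (cfg_left e s (0, - r)) (cfg_right e s (0, - r))
    <= tau_tilde unit_disk (cfg_left e s c) (cfg_right e s c).
Proof.
  intros He Hs Hr Hsr Hc. apply (tau_cfg_le e s r); auto.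
  - unfold sqnorm; cbn [fst snd]. ring.
  - destruct (perp_dominates s r (fst c) (snd c)) as [p1 [p2 [Hp Hle]]]; auto.
    intros q Hq. exists (p1, p2). split; [exact Hp |]. apply Hle, Hq.
Qed.

Lemma xi_of_spec x y : sqnorm (xi_of x y) = 1 /\
  exists s, 0 <= s /\ pscal (1 / 2) (padd x y) = pscal s (xi_of x y).
Proof.
  unfold xi_of. destruct (Req_EM_T (pnorm (padd x y)) 0) as [h | h].
  - split; [unfold sqnorm; cbn [fst snd]; ring |]. exists 0. split; [lra |].
    assert (Hz : sqnorm (padd x y) = 0) by (rewrite <- pnorm_sq, h; ring).
    unfold sqnorm, padd, pscal in *; cbn [fst snd] in *.
    pose proof (pow2_ge_0 (fst x + fst y)). pose proof (pow2_ge_0 (snd x + snd y)).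
    assert (fst x + fst y = 0) by (apply Rsqr_0_uniq; unfold Rsqr; nra).
    assert (snd x + snd y = 0) by (apply Rsqr_0_uniq; unfold Rsqr; nra).
    apply pt_eq; cbn [fst snd]; lra.
  - set (n := pnorm (padd x y)) in *.
    assert (Hn : 0 < n).
    { destruct (Rle_lt_or_eq_dec 0 n (sqrt_pos _)) as [? | e]; [assumption |].
      symmetry in e. contradiction. }
    assert (Hnn : n ^ 2 = sqnorm (padd x y)) by apply pnorm_sq.
    split.
    + unfold sqnorm, pscal in *; cbn [fst snd].
      apply (Rmult_eq_reg_r (n ^ 2)); [| nra].
      rewrite Hnn at 2. field. lra.
    + exists (n / 2). split; [lra |].
      apply pt_eq; unfold pscal; cbn [fst snd]; field; lra.
Qed.

Lemma cfg_of_midpoint e s X Y : sqnorm e = 1 ->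
  pscal (1 / 2) (padd X Y) = pscal s e ->
  let c := rot (pconj e) (pscal (1 / 2) (psub X Y)) in
  X = cfg_left e s c /\ Y = cfg_right e s c.
Proof.
  intros He Hm c. unfold c, cfg_left, cfg_right. rewrite rot_conj, <- Hm by exact He.
  split; apply pt_eq; unfold padd, psub, pscal; cbn [fst snd]; field.
Qed.

Lemma sqnorm_half_diff e X Y : sqnorm e = 1 ->
  sqnorm (rot (pconj e) (pscal (1 / 2) (psub X Y))) = (pnorm (psub X Y) / 2) ^ 2.
Proof.
  intros He. rewrite sqnorm_rot, sqnorm_conj, He, Rmult_1_l.
  replace ((pnorm (psub X Y) / 2) ^ 2) with (pnorm (psub X Y) ^ 2 / 4) by field.
  rewrite pnorm_sq. unfold sqnorm, pscal; cbn [fst snd]. field.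
Qed.

Lemma cfg_radial e s r :
  cfg_left e s (- r, 0) = psub (pscal s e) (pscal r e) /\
  cfg_right e s (- r, 0) = padd (pscal s e) (pscal r e).
Proof. split; apply pt_eq; unfold cfg_left, cfg_right, padd, psub, pscal, rot; cbn [fst snd]; ring. Qed.

Lemma cfg_perp e s r :
  cfg_left e s (0, - r) = psub (pscal s e) (pscal r (pmul_i e)) /\
  cfg_right e s (0, - r) = padd (pscal s e) (pscal r (pmul_i e)).
Proof. split; apply pt_eq; unfold cfg_left, cfg_right, padd, psub, pscal, rot, pmul_i; cbn [fst snd]; ring. Qed.

Theorem lemma3p5 (x y : pt) :
  unit_disk x -> unit_disk y ->
  let xi := xi_of x y in
  let zeta := pmul_i xi in
  let m := pscal (1/2) (padd x y) in
  let r := pnorm (psub x y) / 2 in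
  let x' := psub m (pscal r xi) in
  let y' := padd m (pscal r xi) in
  let x'' := psub m (pscal r zeta) in
  let y'' := padd m (pscal r zeta) in
  unit_disk x' -> unit_disk y' ->
  unit_disk x'' /\ unit_disk y'' /\
  tau_tilde unit_disk x'' y'' <= tau_tilde unit_disk x y /\
  tau_tilde unit_disk x y <= tau_tilde unit_disk x' y'.
Proof.
  intros _ _ xi zeta m r x' y' x'' y'' Hx' Hy'.
  destruct (xi_of_spec x y) as [He [s [Hs Hm]]]. fold xi in He, Hm.
  (* the three pairs are the symmetric pairs around s * xi with offsets c, (-r,0), (0,-r) *)
  destruct (cfg_of_midpoint xi s x y He Hm) as [Ex Ey].
  assert (Hc := sqnorm_half_diff xi x y He). fold r in Hc.
  set (c := rot (pconj xi) (pscal (1 / 2) (psub x y))) in *.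
  assert (Ex' : x' = cfg_left xi s (- r, 0))
    by (rewrite (proj1 (cfg_radial xi s r)); unfold x', m; rewrite Hm; reflexivity).
  assert (Ey' : y' = cfg_right xi s (- r, 0))
    by (rewrite (proj2 (cfg_radial xi s r)); unfold y', m; rewrite Hm; reflexivity).
  assert (Ex'' : x'' = cfg_left xi s (0, - r))
    by (rewrite (proj1 (cfg_perp xi s r)); unfold x'', m; rewrite Hm; reflexivity).
  assert (Ey'' : y'' = cfg_right xi s (0, - r))
    by (rewrite (proj2 (cfg_perp xi s r)); unfold y'', m; rewrite Hm; reflexivity).
  assert (Hr : 0 <= r) by (assert (0 <= pnorm (psub x y)) by apply sqrt_pos; unfold r; lra).
  clearbody xi zeta m c r x' y' x'' y''. subst x y x' y' x'' y''.
  (* y' in the disk means s + r < 1; then the perpendicular pair is in the disk too *)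
  apply unit_disk_iff in Hy'. rewrite (proj2 (sqnorm_cfg xi s _ He)) in Hy'. cbn [fst snd] in Hy'.
  assert (Hsr : s + r < 1) by nra.
  split; [| split; [| split]].
  - apply unit_disk_iff. rewrite (proj1 (sqnorm_cfg xi s _ He)). cbn [fst snd]. nra.
  - apply unit_disk_iff. rewrite (proj2 (sqnorm_cfg xi s _ He)). cbn [fst snd]. nra.
  - apply tau_cfg_perp_le; assumption.
  - apply tau_cfg_le_radial; assumption.
Qed.
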